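(* Let $k$ be an algebraically closed field, let $1\le s\le t$ be integers, $R=k[x,y]/(x^s,y^t)$ with its standard grading, and $\theta$ the image of $x+y$ in $R$. Let $\kappa$ be a nonzero homogeneous element of $R$ and put $d=\sigma(k[\theta]\kappa)$. If $t-1\le d<s+t-2$, then $$\sum_{i=0}^{s+t-2-d}k[\theta]\kappa x^i=\bigoplus_{i=0}^{s+t-2-d}k[\theta]\kappa x^i,$$ i.e. this sum of $k[\theta]$-submodules of $R$ is direct.
   Context: $R=\bigoplus_i R_i$ where $R_i$ is spanned by the images of monomials of degree $i$. For a nonzero homogeneous element $\kappa\in R_m$, the socle degree $\sigma(k[\theta]\kappa)$ is the integer $d$ such that the socle of the $k[\theta]$-module $k[\theta]\kappa$ is contained in $R_d$; equivalently $d=m+e$ where $e$ is the largest integer with $\theta^e\kappa\neq0$. *)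

From HB Require Import structures.
From mathcomp Require Import all_boot all_order all_algebra.
Set Implicit Arguments. Unset Strict Implicit. Unset Printing Implicit Defensive.
Import GRing.Theory.
Local Open Scope ring_scope.

(* The ring R = k[x,y]/(x^s,y^t), represented in its standard monomial basis
   {x^a y^b : a < s, b < t}: an element is the matrix of its coefficients,
   entry (a,b) being the coefficient of x^a y^b. *)
Definition Rq (k : fieldType) (s t : nat) := 'M[k]_(s, t).

Definition mulR (k : fieldType) (s t : nat) (A B : 'M[k]_(s, t)) : 'M[k]_(s, t) :=
  \matrix_(i < s, j < t)
    \sum_(i1 < s) \sum_(j1 < t) \sum_(i2 < s) \sum_(j2 < t)
      (if ((i1 + i2)%N == i) && ((j1 + j2)%N == j) then A i1 j1 * B i2 j2 else 0).

(* the image of the monomial x^a y^b in R (zero if a >= s or b >= t) *)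
Definition monoR (k : fieldType) (s t : nat) (a b : nat) : 'M[k]_(s, t) :=
  \matrix_(i < s, j < t) (if ((i : nat) == a) && ((j : nat) == b) then 1 else 0).

Definition oneR (k : fieldType) (s t : nat) : 'M[k]_(s, t) := monoR k s t 0 0.
Definition xR (k : fieldType) (s t : nat) : 'M[k]_(s, t) := monoR k s t 1 0.
Definition yR (k : fieldType) (s t : nat) : 'M[k]_(s, t) := monoR k s t 0 1.
Definition thetaR (k : fieldType) (s t : nat) : 'M[k]_(s, t) := xR k s t + yR k s t.

Definition powR (k : fieldType) (s t : nat) (A : 'M[k]_(s, t)) (n : nat) : 'M[k]_(s, t) :=
  iter n (mulR A) (oneR k s t).

Definition homogR (k : fieldType) (s t : nat) (m : nat) (A : 'M[k]_(s, t)) : Prop :=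
  forall (i : 'I_s) (j : 'I_t), A i j != 0 -> (i + j)%N = m.

(* sigma(k[theta] kappa) = d for a nonzero homogeneous kappa in R_m:
   d = m + e, e the largest integer with theta^e kappa <> 0 *)
Definition socle_degree (k : fieldType) (s t : nat) (kappa : 'M[k]_(s, t)) (d : nat) : Prop :=
  exists m e : nat,
    [/\ homogR m kappa,
        mulR (powR (thetaR k s t) e) kappa != 0,
        (forall e' : nat, (e < e')%N -> mulR (powR (thetaR k s t) e') kappa = 0)
      & d = (m + e)%N].

Definition thetaPolyElt (k : fieldType) (s t : nat) (p : {poly k})
    (kappa : 'M[k]_(s, t)) (i : nat) : 'M[k]_(s, t) :=
  \sum_(e < size p) p`_e *: mulR (mulR (powR (thetaR k s t) e) kappa) (powR (xR k s t) i).

Definition direct_theta_sum (k : fieldType) (s t : nat) (kappa : 'M[k]_(s, t)) (n : nat) : Prop :=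
  forall p : nat -> {poly k},
    \sum_(i < n.+1) thetaPolyElt (p i) kappa i = 0 ->
    forall i : nat, (i <= n)%N -> thetaPolyElt (p i) kappa i = 0.

From HB Require Import structures.
From mathcomp Require Import all_boot all_order all_algebra.
From mathcomp Require Import zify.
Set Implicit Arguments. Unset Strict Implicit. Unset Printing Implicit Defensive.
Import GRing.Theory.

(* The product of R is the truncation of the product of k[x][y], so R is a commutative
   ring. Let e be maximal with z := theta^e kappa <> 0; then z is homogeneous of degree d and
   theta z = 0. Comparing coefficients in theta z = 0 shows that the coefficients of z
   alternate in sign along the antidiagonal a + b = d, so z has a nonzero coefficient at
   x^(d-t+1) y^(t-1). Hence x^n z <> 0 for n = s+t-2-d, while x^(n+1) z = 0 for degree
   reasons. A relation sum_(i <= n, j <= e) c_ij theta^j kappa x^i = 0 then forces every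
   c_ij = 0: multiplying it by theta^(e-j) kills the terms with a larger j, the terms with a
   smaller j vanish by induction, and the remaining relation sum_i c_ij x^i z = 0 is resolved
   by multiplying with x^(n-i). *)

Lemma sum_ord_widen0 (V : nmodType) m n (F : nat -> V) :
  m <= n -> (forall j, m <= j -> F j = 0%R) ->
  (\sum_(j < n) F j = \sum_(j < m) F j)%R.
Proof.
move=> le_mn F0; rewrite (big_ord_widen _ F le_mn) [RHS]big_mkcond /=.
by apply: eq_bigr => j _; case: ltnP => // /F0.
Qed.

Lemma sum_ord_addn_eq (V : nmodType) n a c (F : nat -> V) : c < n ->
  (\sum_(b < n) (if (a + b == c)%N then F b else 0) = if (a <= c)%N then F (c - a)%N else 0)%R.
Proof.
move=> lt_cn; rewrite -big_mkcond /=.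
have addn_eq b : (a + b == c) = (a <= c) && (b == c - a).
  by apply/eqP/andP => [<-|[le_ac /eqP ->]]; [rewrite leq_addr addKn | rewrite subnKC].
under eq_bigl => b do rewrite addn_eq.
by rewrite (big_ord1_cond_eq _ F (fun=> a <= c)) (leq_ltn_trans (leq_subr a c) lt_cn).
Qed.

Lemma sum_antidiagonal (V : nmodType) n c (F : nat -> nat -> V) : c < n ->
  (\sum_(a < n) \sum_(b < n) (if (a + b == c)%N then F a b else 0) =
   \sum_(a < c.+1) F a (c - a)%N)%R.
Proof.
move=> lt_cn; under eq_bigr => a _ do rewrite sum_ord_addn_eq //.
rewrite (@sum_ord_widen0 _ c.+1 n (fun a => if a <= c then F a (c - a) else 0%R)) //.
  by apply: eq_bigr => a _; rewrite -ltnS ltn_ord.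
by move=> a; rewrite ltnNge => /negbTE ->.
Qed.

Local Open Scope ring_scope.

Lemma coef2M (k : nzRingType) (P Q : {poly {poly k}}) a b :
  (P * Q)`_a`_b = \sum_(l < a.+1) \sum_(l' < b.+1) P`_l`_l' * Q`_(a - l)`_(b - l').
Proof. by rewrite coefM coef_sum; apply: eq_bigr => l _; rewrite coefM. Qed.

Section TruncatedProduct.
Variables (k : fieldType) (s t : nat).
Implicit Types (A B C : 'M[k]_(s, t)) (P Q : {poly {poly k}}).

Definition coefR A (a b : nat) : k :=
  match (insub a : option 'I_s), (insub b : option 'I_t) with
  | Some i, Some j => A i j
  | _, _ => 0
  end.

Lemma coefRE A (i : 'I_s) (j : 'I_t) : coefR A i j = A i j.
Proof. by rewrite /coefR !valK. Qed.

Lemma coefR_out A a b : (s <= a)%N || (t <= b)%N -> coefR A a b = 0.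
Proof.
rewrite /coefR => /orP[le_sa|le_tb]; first by rewrite insubN // -leqNgt.
by case: insubP => // i; rewrite insubN // -leqNgt.
Qed.

Lemma coefR_mx (F : 'I_s -> 'I_t -> k) a b (lt_as : (a < s)%N) (lt_bt : (b < t)%N) :
  coefR (\matrix_(i, j) F i j) a b = F (Ordinal lt_as) (Ordinal lt_bt).
Proof. by rewrite /coefR !insubT mxE. Qed.

Lemma eq_coefR A B :
  (forall a b, (a < s)%N -> (b < t)%N -> coefR A a b = coefR B a b) -> A = B.
Proof. by move=> eqAB; apply/matrixP => i j; rewrite -!coefRE eqAB. Qed.

Lemma coefR0 a b : coefR 0 a b = 0.
Proof. by rewrite /coefR; case: insub => // i; case: insub => // j; rewrite mxE. Qed.

Lemma coefRD A B a b : coefR (A + B) a b = coefR A a b + coefR B a b.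
Proof.
by rewrite /coefR; case: insub => [i|]; [case: insub => [j|] |]; rewrite ?mxE ?addr0.
Qed.

Lemma coefRZ c A a b : coefR (c *: A) a b = c * coefR A a b.
Proof.
by rewrite /coefR; case: insub => [i|]; [case: insub => [j|] |]; rewrite ?mxE ?mulr0.
Qed.

(* polyR A lies in k[y][x]: the outer variable is x, so x^a y^b is 'X^a * ('X^b)%:P. *)
Definition polyR A : {poly {poly k}} := \poly_(a < s) \poly_(b < t) coefR A a b.

Definition truncR P : 'M[k]_(s, t) := \matrix_(i, j) P`_i`_j.

Lemma coef_polyR A a b : (polyR A)`_a`_b = coefR A a b.
Proof.
rewrite /polyR coef_poly; case: ltnP => [_|le_sa]; last by rewrite coef0 coefR_out ?le_sa.
by rewrite coef_poly; case: ltnP => // le_tb; rewrite coefR_out ?le_tb ?orbT.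
Qed.

Lemma coefR_truncR P a b : (a < s)%N -> (b < t)%N -> coefR (truncR P) a b = P`_a`_b.
Proof. by move=> lt_as lt_bt; rewrite coefR_mx. Qed.

Lemma mulR_polyR A B : mulR A B = truncR (polyR A * polyR B).
Proof.
apply: eq_coefR => a b lt_as lt_bt; rewrite coefR_truncR // coef2M /mulR coefR_mx /=.
pose G (i1 i2 j1 j2 : nat) := coefR A i1 j1 * coefR B i2 j2.
pose F (i1 i2 : nat) := \sum_(j1 < t) \sum_(j2 < t)
  (if (j1 + j2 == b)%N then G i1 i2 j1 j2 else 0).
transitivity (\sum_(i1 < s) \sum_(i2 < s) if (i1 + i2 == a)%N then F i1 i2 else 0).
  apply: eq_bigr => i1 _; rewrite exchange_big; apply: eq_bigr => i2 _.
  case: (_ == a) => /=; last by rewrite big1 // => j1 _; rewrite big1.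
  by apply: eq_bigr => j1 _; apply: eq_bigr => j2 _; rewrite /G !coefRE.
rewrite sum_antidiagonal //; apply: eq_bigr => l _.
by rewrite /F sum_antidiagonal //; apply: eq_bigr => l' _; rewrite !coef_polyR.
Qed.

Lemma truncR_mulr_polyR P Q : truncR (P * polyR (truncR Q)) = truncR (P * Q).
Proof.
apply: eq_coefR => a b lt_as lt_bt; rewrite !coefR_truncR // !coef2M.
apply: eq_bigr => l _; apply: eq_bigr => l' _; rewrite coef_polyR coefR_truncR //.
  exact: leq_ltn_trans (leq_subr _ _) lt_as.
exact: leq_ltn_trans (leq_subr _ _) lt_bt.
Qed.

Lemma polyRD A B : polyR (A + B) = polyR A + polyR B.
Proof. by apply/polyP => a; apply/polyP => b; rewrite !coefD !coef_polyR coefRD. Qed.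

Lemma polyRZ c A : polyR (c *: A) = c%:P%:P * polyR A.
Proof. by apply/polyP => a; apply/polyP => b; rewrite !coefCM !coef_polyR coefRZ. Qed.

Lemma truncRD P Q : truncR (P + Q) = truncR P + truncR Q.
Proof. by apply/matrixP => i j; rewrite !mxE !coefD. Qed.

Lemma truncR_mulC c P : truncR (c%:P%:P * P) = c *: truncR P.
Proof. by apply/matrixP => i j; rewrite !mxE !coefCM. Qed.

Lemma mulRC A B : mulR A B = mulR B A.
Proof. by rewrite !mulR_polyR mulrC. Qed.

Lemma mulRA A B C : mulR A (mulR B C) = mulR (mulR A B) C.
Proof.
rewrite !mulR_polyR truncR_mulr_polyR [polyR (truncR _) * _]mulrC truncR_mulr_polyR.
by rewrite mulrA mulrC.
Qed.

Lemma mulRDl A B C : mulR (A + B) C = mulR A C + mulR B C.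
Proof. by rewrite !mulR_polyR polyRD mulrDl truncRD. Qed.

Lemma mulRZ c A B : mulR (c *: A) B = c *: mulR A B.
Proof. by rewrite !mulR_polyR polyRZ -mulrA truncR_mulC. Qed.

Lemma mulR_truncR P A : mulR (truncR P) A = truncR (P * polyR A).
Proof. by rewrite mulR_polyR mulrC truncR_mulr_polyR mulrC. Qed.

Lemma monoR_truncR a0 b0 : monoR k s t a0 b0 = truncR ('X^a0 * ('X^b0)%:P).
Proof.
apply/matrixP => i j; rewrite !mxE mulrC coefCM coefXn mulr_natr coefMn coefXn.
by case: (i == a0 :> nat); case: (j == b0 :> nat).
Qed.

Lemma coefR_mulR_monoR a0 b0 A a b : (a < s)%N -> (b < t)%N ->
  coefR (mulR (monoR k s t a0 b0) A) a b =
  if (a < a0)%N then 0 else if (b < b0)%N then 0 else coefR A (a - a0) (b - b0).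
Proof.
move=> lt_as lt_bt; rewrite monoR_truncR mulR_truncR coefR_truncR //= -mulrA coefXnM.
by case: ltnP; rewrite ?coef0 // coefCM coefXnM coef_polyR.
Qed.

Lemma mul1R A : mulR (oneR k s t) A = A.
Proof.
by apply: eq_coefR => a b lt_as lt_bt; rewrite coefR_mulR_monoR // !ltn0 !subn0.
Qed.

End TruncatedProduct.

(* R is the zero ring when s = 0 or t = 0, so it is only a comPzRingType; without an
   algebra instance, scalerAr is replaced by scaleRAr below. *)
HB.instance Definition _ (k : fieldType) (s t : nat) := GRing.Lmodule.on (Rq k s t).
HB.instance Definition _ (k : fieldType) (s t : nat) :=
  GRing.Zmodule_isComPzRing.Build (Rq k s t)
    (@mulRA k s t) (@mulRC k s t) (@mul1R k s t) (@mulRDl k s t).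

Lemma mul_expr_eq0_leq (A : pzRingType) (X w : A) n j :
  X ^+ n * w = 0 -> (n <= j)%N -> X ^+ j * w = 0.
Proof. by move=> Xnw /subnK <-; rewrite exprD -mulrA Xnw mulr0. Qed.

Section TruncatedRing.
Variables (k : fieldType) (s t : nat).
Local Notation R := (Rq k s t).
Local Notation x := (xR k s t : R).
Local Notation theta := (thetaR k s t : R).
Implicit Types (A B z w T K X kappa : R) (c : k).

Lemma mulRE A B : mulR A B = A * B.
Proof. by []. Qed.

Lemma powRE A n : powR A n = A ^+ n.
Proof. by elim: n => //= n IH; rewrite exprS -IH. Qed.

Lemma scaleRAr c A B : c *: (A * B) = A * (c *: B).
Proof. by rewrite [RHS]mulrC -[RHS]mulRE mulRZ mulrC. Qed.

Lemma coefR_neq0_bounds A a b : coefR A a b != 0 -> (a < s)%N && (b < t)%N.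
Proof. by apply: contraNT; rewrite negb_and -!leqNgt => /coefR_out ->. Qed.

Lemma exists_coefR_neq0 A : A != 0 -> exists a b, coefR A a b != 0.
Proof. by case/matrix0Pn => i [j Aij]; exists i, j; rewrite coefRE. Qed.

Lemma coefR_mulx A a b : (a < s)%N -> (b < t)%N ->
  coefR (x * A) a b = if (0 < a)%N then coefR A a.-1 b else 0.
Proof.
move=> lt_as lt_bt; rewrite -mulRE coefR_mulR_monoR // ltn0 subn0 subn1.
by case: a lt_as.
Qed.

Lemma coefR_mulXn A n a b : (a < s)%N -> (b < t)%N ->
  coefR (x ^+ n * A) a b = if (n <= a)%N then coefR A (a - n) b else 0.
Proof.
elim: n a => [|n IH] a lt_as lt_bt; first by rewrite mul1r subn0.
rewrite exprS -mulrA coefR_mulx //; case: a lt_as => [|a] //= lt_as.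
by rewrite IH ?subSS // ltnW.
Qed.

Lemma coefR_mul_theta A a b : (a < s)%N -> (b < t)%N ->
  coefR (theta * A) a b =
  (if (0 < a)%N then coefR A a.-1 b else 0) + (if (0 < b)%N then coefR A a b.-1 else 0).
Proof.
move=> lt_as lt_bt; rewrite mulrDl coefRD coefR_mulx // -mulRE coefR_mulR_monoR //.
by rewrite ltn0 subn0 subn1; case: b lt_bt.
Qed.

Lemma homogR_coefR m A a b : homogR m A -> coefR A a b != 0 -> (a + b)%N = m.
Proof.
move=> homA Aab; have /andP[lt_as lt_bt] := coefR_neq0_bounds Aab.
by move: Aab; rewrite -[a]/(Ordinal lt_as : nat) -[b]/(Ordinal lt_bt : nat) coefRE => /homA.
Qed.

Lemma homogR_mul_theta m A : homogR m A -> homogR m.+1 (theta * A).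
Proof.
move=> homA i j; rewrite -coefRE coefR_mul_theta //.
case: ifP => [i_gt0|_]; case: ifP => [j_gt0|_]; rewrite ?addr0 ?add0r ?eqxx //.
- case: (eqVneq (coefR A i.-1 j) 0) => [->|/(homogR_coefR homA)]; last by lia.
  by rewrite add0r => /(homogR_coefR homA); lia.
- by move/(homogR_coefR homA); lia.
- by move/(homogR_coefR homA); lia.
Qed.

Lemma homogR_mul_theta_exp m e A : homogR m A -> homogR (m + e) (theta ^+ e * A).
Proof.
move=> homA; elim: e => [|e IH]; first by rewrite mul1r addn0.
by rewrite exprS -mulrA addnS; apply: homogR_mul_theta.
Qed.

Lemma theta_kernel_coef_sign z a b r : theta * z = 0 ->
  (a + r < s)%N -> (b < t)%N -> (r <= b)%N ->
  coefR z (a + r) (b - r) = (-1) ^+ r * coefR z a b.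
Proof.
move=> Tz0; elim: r => [|r IH] lt_ars lt_bt le_rb; first by rewrite addn0 subn0 mul1r.
have lt_ars' : (a + r < s)%N by rewrite -ltnS -addnS ltnW.
have := coefR_mul_theta z lt_ars (leq_ltn_trans (leq_subr r b) lt_bt).
rewrite Tz0 coefR0 addnS /= subn_gt0 le_rb IH ?(ltnW le_rb) //.
rewrite -subnS => /eqP; rewrite eq_sym addrC addr_eq0 => /eqP ->.
by rewrite exprS mulN1r mulNr.
Qed.

Lemma theta_kernel_top_coef d z : z != 0 -> homogR d z -> (t - 1 <= d)%N ->
  theta * z = 0 -> coefR z (d - (t - 1)) (t - 1) != 0.
Proof.
move=> z_neq0 homz le_td Tz0; have [a [b zab]] := exists_coefR_neq0 z_neq0.
have /andP[lt_as lt_bt] := coefR_neq0_bounds zab; have dab := homogR_coefR homz zab.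
have Ea : (d - (t - 1) + (t - 1 - b) = a)%N by lia.
have Eb : (t - 1 - (t - 1 - b) = b)%N by lia.
move: zab; rewrite -Eb -Ea theta_kernel_coef_sign ?Ea ?leq_subr //; last by lia.
by rewrite mulf_eq0 negb_or => /andP[].
Qed.

Lemma mulXn_homogR_eq0 d z : homogR d z -> x ^+ (s + t - 2 - d).+1 * z = 0.
Proof.
move=> homz; apply: eq_coefR => a b lt_as lt_bt; rewrite coefR_mulXn // coefR0.
by case: ifP => // le_na; apply/eqP; apply: contraT => /(homogR_coefR homz); lia.
Qed.

Lemma theta_kernel_mulXn_neq0 d z : z != 0 -> homogR d z -> (t - 1 <= d)%N ->
  theta * z = 0 -> x ^+ (s + t - 2 - d) * z != 0.
Proof.
move=> z_neq0 homz le_td Tz0; have top := theta_kernel_top_coef z_neq0 homz le_td Tz0.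
have /andP[lt_ds lt_t] := coefR_neq0_bounds top.
apply: contraNneq top => Xz0.
have lt_s1 : (s - 1 < s)%N by lia.
have := coefR_mulXn z (s + t - 2 - d) lt_s1 lt_t; rewrite Xz0 coefR0.
have le_n : (s + t - 2 - d <= s - 1)%N by lia.
have -> : (s - 1 - (s + t - 2 - d) = d - (t - 1))%N by lia.
by rewrite le_n => /esym/eqP.
Qed.

Lemma orbit_coef_eq0 X w n (c : nat -> k) :
  X ^+ n * w != 0 -> X ^+ n.+1 * w = 0 ->
  \sum_(i < n.+1) c i *: (X ^+ i * w) = 0 -> forall i, (i <= n)%N -> c i = 0.
Proof.
move=> Xnw Xn1w sum0; elim/ltn_ind => i IH le_in.
have : X ^+ (n - i) * \sum_(i' < n.+1) c i' *: (X ^+ i' * w) = c i *: (X ^+ n * w).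
  rewrite mulr_sumr (bigD1 (Ordinal (le_in : (i < n.+1)%N))) //= big1 ?addr0.
    by rewrite -scaleRAr mulrA -exprD subnK.
  move=> i' ne_i'i; rewrite -scaleRAr mulrA -exprD.
  case: (ltngtP i' i) => [lt_i'i|lt_ii'|eq_i'i].
  - by rewrite IH ?scale0r // -ltnS (leq_ltn_trans (ltnW lt_i'i)).
  - by rewrite (mul_expr_eq0_leq Xn1w) ?scaler0 //; lia.
  - by case/eqP: ne_i'i; apply: val_inj.
rewrite sum0 mulr0 => /esym/eqP; rewrite scaler_eq0 (negbTE Xnw) orbF.
by move/eqP.
Qed.

Lemma biorbit_coef_eq0 T K X e n (c : nat -> nat -> k) :
  T ^+ e.+1 * K = 0 -> X ^+ n * (T ^+ e * K) != 0 -> X ^+ n.+1 * (T ^+ e * K) = 0 ->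
  \sum_(i < n.+1) \sum_(j < e.+1) c i j *: (T ^+ j * K * X ^+ i) = 0 ->
  forall i j, (i <= n)%N -> (j <= e)%N -> c i j = 0.
Proof.
move=> Te1K Xnz Xn1z sum0 i j; elim/ltn_ind: j i => j IH i le_in le_je.
apply: (orbit_coef_eq0 (c := fun i' => c i' j) Xnz Xn1z) le_in.
rewrite -[RHS](mulr0 (T ^+ (e - j))) -[X in _ = _ * X]sum0 mulr_sumr.
apply: eq_bigr => i' _.
rewrite mulr_sumr (bigD1 (Ordinal (le_je : (j < e.+1)%N))) //= big1 ?addr0.
  by rewrite -scaleRAr [X ^+ _ * _]mulrC !mulrA -exprD subnK.
move=> j' ne_j'j; rewrite -scaleRAr !mulrA -exprD.
case: (ltngtP j' j) => [lt_j'j|lt_jj'|eq_j'j].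
- by rewrite IH ?scale0r // -ltnS ?ltn_ord // (leq_ltn_trans (ltnW lt_j'j)).
- by rewrite (mul_expr_eq0_leq Te1K) ?mul0r ?scaler0 //; lia.
- by case/eqP: ne_j'j; apply: val_inj.
Qed.

Lemma thetaPolyEltE (q : {poly k}) kappa i e : theta ^+ e.+1 * kappa = 0 ->
  thetaPolyElt q kappa i = \sum_(j < e.+1) q`_j *: (theta ^+ j * kappa * x ^+ i).
Proof.
move=> Te1K; rewrite /thetaPolyElt; under eq_bigr do rewrite !mulRE !powRE.
pose F j := q`_j *: (theta ^+ j * kappa * x ^+ i); pose N := maxn (size q) e.+1.
rewrite -(@sum_ord_widen0 _ (size q) N F) ?leq_maxl //; last first.
  by move=> j le_qj; rewrite /F nth_default ?scale0r.
rewrite -(@sum_ord_widen0 _ e.+1 N F) ?leq_maxr // => j le_ej.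
by rewrite /F (mul_expr_eq0_leq Te1K le_ej) mul0r scaler0.
Qed.

End TruncatedRing.

Theorem lemma2p14 (k : closedFieldType) (s t : nat) (kappa : 'M[k]_(s, t)) (m d : nat) :
  (1 <= s)%N -> (s <= t)%N ->
  kappa != 0 -> homogR m kappa ->
  socle_degree kappa d ->
  (t - 1 <= d)%N -> (d < s + t - 2)%N ->
  direct_theta_sum kappa (s + t - 2 - d).
Proof.
move=> _ _ _ _ [m' [e [homK Tek_neq0 Tk_eq0 ->]]] le_td _ p sum_eq0 i le_i.
set T := thetaR k s t : Rq k s t; set K := kappa : Rq k s t.
have Te1K : T ^+ e.+1 * K = 0 by rewrite -powRE -mulRE Tk_eq0.
have z_neq0 : T ^+ e * K != 0 by rewrite -powRE -mulRE.
have hom_z : homogR (m' + e) (T ^+ e * K) by apply: homogR_mul_theta_exp.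
have Tz0 : T * (T ^+ e * K) = 0 by rewrite mulrA -exprS.
have Xnz := theta_kernel_mulXn_neq0 z_neq0 hom_z le_td Tz0.
have Xn1z := mulXn_homogR_eq0 hom_z.
move: sum_eq0; under eq_bigr do rewrite (thetaPolyEltE _ _ Te1K).
move/(biorbit_coef_eq0 (c := fun i j => (p i)`_j) Te1K Xnz Xn1z) => coef_eq0.
rewrite (thetaPolyEltE _ _ Te1K) big1 // => j _.
by rewrite coef_eq0 ?scale0r // -ltnS.
Qed.
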